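(* Consider a platform with effective driver arrival rate $e>0$, driver abandonment rate $\beta>0$, static price $\phi_i\in[0,\phi_h]$, and passenger arrival rate $\lambda_i(\beta)\ge0$, where $\lambda_i(\beta)\to\lambda_i$ as $\beta\to0$. Let $\mathcal D_i(\phi_i;\lambda_i(\beta),\beta)=\bigl(\sum_{n\ge0}\frac{e^n}{\prod_{a=1}^n(\lambda_i(\beta)f(\phi_i)+a\beta)}\bigr)^{-1}$ and $\mathcal M_i(\phi_i;\lambda_i(\beta),\beta)=\lambda_i(\beta)f(\phi_i)\phi_i\bigl(1-\mathcal D_i(\phi_i;\lambda_i(\beta),\beta)\bigr)$. Then as $\beta\to0$, $$\mathcal M_i\to\tilde{\mathcal M}_i(\phi_i)=\begin{cases}e\phi_i&\text{if } \frac{e}{\lambda_i f(\phi_i)}<1,\\ \lambda_i f(\phi_i)\phi_i&\text{otherwise,}\end{cases}\qquad \mathcal D_i\to\tilde{\mathcal D}_i(\phi_i;\lambda_i)=\Bigl(1-\frac{e}{\lambda_i f(\phi_i)}\Bigr)^+.$$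
   Context: $f:[0,\phi_h]\to(0,1]$ is strictly concave, strictly decreasing, differentiable with $f(0)=1$ (passenger acceptance probability of price $\phi$). $\mathcal D_i$ is the stationary probability of no waiting driver and $\mathcal M_i$ the long-run matching revenue rate of a platform where passengers arrive Poisson at rate $\lambda_i(\beta)$ and drivers (effective rate $e$) wait and abandon at rate $\beta$. Convention: $e/0=+\infty$. *)

From HB Require Import structures.
From mathcomp Require Import all_boot all_order all_algebra.
From mathcomp Require Import all_classical all_reals all_analysis.
Set Implicit Arguments. Unset Strict Implicit. Unset Printing Implicit Defensive.
Import Order.TTheory GRing.Theory Num.Theory.
Import numFieldNormedType.Exports.
Local Open Scope classical_set_scope.
Local Open Scope ring_scope.

Definition Dterm {R : realType} (f : R -> R) (e phi lam beta : R) (n : nat) : R :=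
  e ^+ n / \prod_(1 <= a < n.+1) (lam * f phi + a%:R * beta).

Definition Dcal {R : realType} (f : R -> R) (e phi lam beta : R) : R :=
  (limn (series (Dterm f e phi lam beta)))^-1.

Definition Mcal {R : realType} (f : R -> R) (e phi lam beta : R) : R :=
  lam * f phi * phi * (1 - Dcal f e phi lam beta).

(* limits; convention e/0 = +oo, encoded by the case lam * f phi = 0 *)
Definition Mtilde {R : realType} (f : R -> R) (e phi lam : R) : R :=
  if (lam * f phi != 0) && (e / (lam * f phi) < 1) then e * phi
  else lam * f phi * phi.

Definition Dtilde {R : realType} (f : R -> R) (e phi lam : R) : R :=
  if lam * f phi == 0 then 0 else Num.max 0 (1 - e / (lam * f phi)).

From HB Require Import structures.
From mathcomp Require Import all_boot all_order all_algebra.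
From mathcomp Require Import all_classical all_reals all_analysis.
From mathcomp Require Import ring lra.
Set Implicit Arguments. Unset Strict Implicit. Unset Printing Implicit Defensive.
Import Order.TTheory GRing.Theory Num.Theory.
Import numFieldNormedType.Exports.
Local Open Scope classical_set_scope.
Local Open Scope ring_scope.

(* Write c = lam f(phi) and b = beta. The terms w_n of the series defining D
   satisfy the balance equations w_(n+1) (c + (n+1) b) = e w_n. Summing them,
   and their first moments, bounds the sum S of the series for e < c:
     (c - e) / c <= 1 / S <= (c - e + b e / (c - e)) / c,
   so D = 1 / S tends to 1 - e / c0 when e < c0. When c0 <= e, S is
   nonincreasing in c, and the lower bound at c = e + d with b e <= d^2 gives
   1 / S <= 2 d / e, so D tends to 0. The limit of M = c phi (1 - D) follows
   by continuity. *)

Definition stat_weight {R : realType} (e c b : R) (n : nat) : R :=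
  e ^+ n / \prod_(1 <= a < n.+1) (c + a%:R * b).

Definition norm_const {R : realType} (e c b : R) : R :=
  limn (series (stat_weight e c b)).

Section StationaryWeights.
Variables (R : realType) (e c b : R).
Hypotheses (e_gt0 : 0 < e) (c_ge0 : 0 <= c) (b_gt0 : 0 < b).

Local Notation w := (stat_weight e c b).
Local Notation W N := (\sum_(0 <= k < N) w k).
Local Notation M N := (\sum_(0 <= k < N) k%:R * w k).

Lemma rate_gt0 n : 0 < c + n.+1%:R * b.
Proof. by rewrite ltr_wpDl // mulr_gt0. Qed.

Lemma prod_rates_gt0 n : 0 < \prod_(1 <= a < n.+1) (c + a%:R * b).
Proof.
by rewrite big_nat_cond; apply: prodr_gt0 => -[|a] // _; apply: rate_gt0.
Qed.

Lemma stat_weight_ge0 n : 0 <= w n.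
Proof. by rewrite divr_ge0 ?exprn_ge0 ?ltW ?prod_rates_gt0. Qed.

Lemma stat_weight0 : w 0 = 1.
Proof. by rewrite /stat_weight big_geq // expr0 divr1. Qed.

Lemma stat_weightS n : w n.+1 = e * w n / (c + n.+1%:R * b).
Proof. by rewrite /stat_weight big_nat_recr //= exprS invfM !mulrA. Qed.

Lemma stat_weight_balance n : w n.+1 * (c + n.+1%:R * b) = e * w n.
Proof. by rewrite stat_weightS divfK // gt_eqF ?rate_gt0. Qed.

Lemma stat_weight_le_exp_coeff n : w n <= exp_coeff (e / b) n.
Proof.
elim: n => [|n IH]; first by rewrite stat_weight0 /exp_coeff /= expr0 divr1.
have -> : exp_coeff (e / b) n.+1 = e * exp_coeff (e / b) n / (n.+1%:R * b).
  rewrite /exp_coeff /= exprS factS natrM; field.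
  by rewrite gt_eqF //= addrC natr1 !pnatr_eq0 /= -lt0n fact_gt0.
have e_ge0 := ltW e_gt0.
rewrite stat_weightS; apply: ler_pM.
- by rewrite mulr_ge0 ?stat_weight_ge0.
- by rewrite invr_ge0 ltW ?rate_gt0.
- by rewrite ler_wpM2l.
by rewrite lef_pV2 ?posrE ?rate_gt0 ?mulr_gt0 // lerDr.
Qed.

Lemma is_cvg_stat_weight_series : cvgn (series w).
Proof.
apply: series_le_cvg stat_weight_ge0 _ stat_weight_le_exp_coeff _.
  by move=> n; rewrite exp_coeff_ge0 // divr_ge0 ?ltW.
exact: is_cvg_series_exp_coeff.
Qed.

Lemma partial_sum_le_norm_const n : W n <= norm_const e c b.
Proof.
apply: (nondecreasing_cvgn_le _ is_cvg_stat_weight_series).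
by apply: nondecreasing_series => k _ _; apply: stat_weight_ge0.
Qed.

Lemma norm_const_ge1 : 1 <= norm_const e c b.
Proof. by have := partial_sum_le_norm_const 1; rewrite big_nat1 stat_weight0. Qed.

Lemma stat_weight_drop n : c * w n.+1 <= e * w n.
Proof.
rewrite -stat_weight_balance mulrC ler_wpM2l ?stat_weight_ge0 // lerDl.
by rewrite mulr_ge0 // ltW.
Qed.

Lemma first_moment_sum_ge0 N : 0 <= M N.
Proof. by rewrite sumr_ge0 // => k _; rewrite mulr_ge0 ?stat_weight_ge0. Qed.

Lemma balance_sum N : (c - e) * W N.+1 = c - b * M N.+1 - e * w N.
Proof.
elim: N => [|N IH]; first by rewrite !big_nat1 stat_weight0; lra.
rewrite big_nat_recr //= [M N.+2]big_nat_recr //= mulrDr IH.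
by have := stat_weight_balance N; lra.
Qed.

(* The first-moment balance, with the nonnegative term [b * \sum_k k^2 w k]
   dropped. *)
Lemma first_moment_sum_le N : (c - e) * M N.+1 + e * N.+1%:R * w N <= e * W N.+1.
Proof.
elim: N => [|N IH]; first by rewrite !big_nat1 stat_weight0; lra.
rewrite big_nat_recr //= [W N.+2]big_nat_recr //= mulrDr.
have := ler_wpM2l (ler0n _ N.+1) (stat_weight_drop N).
by rewrite -!natr1 in IH *; lra.
Qed.

Lemma norm_const_le : e < c -> (c - e) * norm_const e c b <= c.
Proof.
move=> ec; have ce_gt0 : 0 < c - e by rewrite subr_gt0.
rewrite -ler_pdivlMl // mulrC; apply: limr_le is_cvg_stat_weight_series _.
apply: nearW => -[|N]; first by rewrite /series /= big_geq // divr_ge0 // ltW.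
rewrite /series /= ler_pdivlMr // mulrC balance_sum.
have := mulr_ge0 (ltW b_gt0) (first_moment_sum_ge0 N.+1).
by have := mulr_ge0 (ltW e_gt0) (stat_weight_ge0 N); lra.
Qed.

Lemma norm_const_ge : e < c -> c <= (c - e + b * e / (c - e)) * norm_const e c b.
Proof.
move=> ec; have ce_gt0 : 0 < c - e by rewrite subr_gt0.
have tail_cvg : c - e * w N @[N --> \oo] --> c.
  rewrite -[X in _ --> X]subr0 -(mulr0 e); apply: cvgB; first exact: cvg_cst.
  exact: cvgMr (cvg_series_cvg_0 is_cvg_stat_weight_series).
apply: (cvgr_to_le tail_cvg); apply: nearW => N.
have M_le : M N.+1 <= e / (c - e) * W N.+1.
  rewrite mulrAC ler_pdivlMr // mulrC; apply: le_trans (first_moment_sum_le N).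
  by rewrite lerDl mulr_ge0 ?stat_weight_ge0 // mulr_ge0 // ltW.
apply: (@le_trans _ _ ((c - e + b * e / (c - e)) * W N.+1)).
  have := ler_wpM2l (ltW b_gt0) M_le; have := balance_sum N; lra.
by rewrite ler_wpM2l ?partial_sum_le_norm_const // addr_ge0 ?divr_ge0 ?mulr_ge0 ?ltW.
Qed.

End StationaryWeights.

Lemma norm_const_antitone (R : realType) (e c c' b : R) :
  0 < e -> 0 <= c -> c <= c' -> 0 < b -> norm_const e c' b <= norm_const e c b.
Proof.
move=> e_gt0 c_ge0 cc' b_gt0; have c'_ge0 := le_trans c_ge0 cc'.
apply: ler_lim; [exact: is_cvg_stat_weight_series.. |].
apply: nearW => n; apply: ler_sum => k _.
rewrite /stat_weight ler_pM2l ?exprn_gt0 // lef_pV2 ?posrE ?prod_rates_gt0 //.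
rewrite big_nat_cond [leRHS]big_nat_cond; apply: ler_prod => a _.
by rewrite lerD2r cc' addr_ge0 // mulr_ge0 // ltW.
Qed.

Lemma inv_norm_const_bounds (R : realType) (e c b : R) : 0 < e -> 0 < b -> e < c ->
  (c - e) / c <= (norm_const e c b)^-1 <= (c - e + b * e / (c - e)) / c.
Proof.
move=> e_gt0 b_gt0 ec; have c_gt0 := lt_trans e_gt0 ec.
have S_gt0 : 0 < norm_const e c b.
  exact: lt_le_trans ltr01 (norm_const_ge1 e_gt0 (ltW c_gt0) b_gt0).
apply/andP; split.
  by rewrite ler_pdivrMr // mulrC ler_pdivlMr // norm_const_le // ltW.
by rewrite ler_pdivlMr // mulrC ler_pdivrMr // norm_const_ge // ltW.
Qed.

Lemma inv_norm_const_le (R : realType) (e c b d : R) :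
  0 < e -> 0 <= c -> 0 < b -> 0 < d -> c <= e + d -> b * e <= d ^+ 2 ->
  (norm_const e c b)^-1 <= 2 * d / e.
Proof.
move=> e_gt0 c_ge0 b_gt0 d_gt0 c_le be_le.
have ed_ge0 : 0 <= e + d by rewrite addr_ge0 ?ltW.
have e_lt_ed : e < e + d by rewrite ltrDl.
have S'_ge1 := norm_const_ge1 e_gt0 ed_ge0 b_gt0.
have S'_le := norm_const_antitone e_gt0 c_ge0 c_le b_gt0.
have := norm_const_ge e_gt0 ed_ge0 b_gt0 e_lt_ed.
rewrite (addrAC e) subrr add0r => S'_lower.
have g_le : b * e / d <= d by rewrite ler_pdivrMr // -expr2.
move: S'_ge1 S'_le S'_lower.
set S' := norm_const e (e + d) b; set S := norm_const e c b => S'_ge1 S'_le S'_lower.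
have S_gt0 : 0 < S := lt_le_trans ltr01 (le_trans S'_ge1 S'_le).
have S'_slack : 0 <= (d - b * e / d) * S' by rewrite mulr_ge0 ?subr_ge0 // (le_trans ler01).
have S_gap : 0 <= d * (S - S') by rewrite mulr_ge0 ?subr_ge0 // ltW.
by rewrite ler_pdivlMr // mulrC ler_pdivrMr //; lra.
Qed.

Section VanishingAbandonment.
Variables (R : realType) (e c0 : R) (c : R -> R).
Hypotheses (e_gt0 : 0 < e) (c_cvg : c b @[b --> 0^'+] --> c0).

Lemma inv_norm_const_cvg_gt : e < c0 ->
  (norm_const e (c b) b)^-1 @[b --> 0^'+] --> (c0 - e) / c0.
Proof.
move=> ec0; have c0_neq0 : c0 != 0 by rewrite gt_eqF // (lt_trans e_gt0).
have ce0_neq0 : c0 - e != 0 by rewrite gt_eqF // subr_gt0.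
have lower_cvg : (c b - e) / c b @[b --> 0^'+] --> (c0 - e) / c0.
  exact: cvgM (cvgB c_cvg (cvg_cst _)) (cvgV c0_neq0 c_cvg).
have upper_cvg :
    (c b - e + b * e / (c b - e)) / c b @[b --> 0^'+] --> (c0 - e) / c0.
  have -> : (c0 - e) / c0 = (c0 - e + 0 * e / (c0 - e)) / c0.
    by rewrite !mul0r addr0.
  apply: cvgM (cvgV c0_neq0 c_cvg); apply: cvgD (cvgB c_cvg (cvg_cst _)) _.
  apply: cvgM (cvgV ce0_neq0 (cvgB c_cvg (cvg_cst _))).
  by apply: cvgM (cvg_cst _); apply: cvg_at_right_filter; exact: cvg_id.
apply: squeeze_cvgr lower_cvg upper_cvg; near=> b.
apply: inv_norm_const_bounds => //; near: b.
exact: cvgr_gt c_cvg _ ec0.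
Unshelve. all: by end_near.
Qed.

Lemma inv_norm_const_cvg_le : (forall b, 0 < b -> 0 <= c b) -> c0 <= e ->
  (norm_const e (c b) b)^-1 @[b --> 0^'+] --> 0.
Proof.
move=> c_ge0 c0e; apply/cvgrPdist_le => eps eps_gt0.
pose d := e * eps / 2; have d_gt0 : 0 < d by rewrite divr_gt0 // mulr_gt0.
have -> : eps = 2 * d / e by rewrite /d; field; rewrite gt_eqF.
near=> b; have b_gt0 : 0 < b by near: b; exact: nbhs_right_gt.
have S_ge1 := norm_const_ge1 e_gt0 (c_ge0 b b_gt0) b_gt0.
rewrite sub0r normrN ger0_norm ?invr_ge0 ?(le_trans ler01) //.
apply: inv_norm_const_le => //; first exact: c_ge0.
- apply: ltW; near: b; apply: (cvgr_lt c0 c_cvg).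
  by rewrite (le_lt_trans c0e) // ltrDl.
- rewrite -ler_pdivlMr // ltW //; near: b.
  by apply: nbhs_right_lt; rewrite divr_gt0 // exprn_gt0.
Unshelve. all: by end_near.
Qed.

End VanishingAbandonment.

Lemma DcalE (R : realType) (f : R -> R) (e phi lam beta : R) :
  Dcal f e phi lam beta = (norm_const e (lam * f phi) beta)^-1.
Proof. by []. Qed.

Section LimitingValues.
Variables (R : realType) (f : R -> R) (e phi lam0 : R).
Hypothesis e_gt0 : 0 < e.

Lemma Dtilde_gt : e < lam0 * f phi ->
  Dtilde f e phi lam0 = (lam0 * f phi - e) / (lam0 * f phi).
Proof.
move=> ec0; have c0_gt0 := lt_trans e_gt0 ec0.
rewrite /Dtilde gt_eqF // max_r; first by rewrite mulrBl divff // gt_eqF.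
by rewrite subr_ge0 ler_pdivrMr // mul1r ltW.
Qed.

Lemma Dtilde_le : 0 <= lam0 * f phi -> lam0 * f phi <= e -> Dtilde f e phi lam0 = 0.
Proof.
move=> c0_ge0 c0e; rewrite /Dtilde; case: eqP => // /eqP c0_neq0.
by rewrite max_l // subr_le0 ler_pdivlMr ?lt0r ?c0_neq0 // mul1r.
Qed.

Lemma Mtilde_Dtilde : 0 <= lam0 * f phi ->
  Mtilde f e phi lam0 = lam0 * f phi * phi * (1 - Dtilde f e phi lam0).
Proof.
move=> c0_ge0; case: (ltrP e (lam0 * f phi)) => [ec0|c0e].
  have c0_gt0 := lt_trans e_gt0 ec0.
  rewrite Dtilde_gt // /Mtilde gt_eqF //= ltr_pdivrMr // mul1r ec0.
  by move: (lam0 * f phi) c0_gt0 => c0 c0_gt0; field; rewrite gt_eqF.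
rewrite Dtilde_le // subr0 mulr1 /Mtilde; case: eqP => //= /eqP c0_neq0.
by rewrite ltr_pdivrMr ?lt0r ?c0_neq0 // mul1r ltNge c0e.
Qed.

End LimitingValues.

Theorem lemma4 (R : realType) (f : R -> R) (phi_h e phi lam0 : R) (lam : R -> R) :
  0 < phi_h ->
  (* f : [0, phi_h] -> (0,1] *)
  (forall x, 0 <= x <= phi_h -> 0 < f x <= 1) ->
  f 0 = 1 ->
  (* strictly decreasing on [0, phi_h] *)
  (forall x y, 0 <= x -> x < y -> y <= phi_h -> f y < f x) ->
  (* strictly concave on [0, phi_h] *)
  (forall x y t, 0 <= x <= phi_h -> 0 <= y <= phi_h -> x != y -> 0 < t < 1 ->
     t * f x + (1 - t) * f y < f (t * x + (1 - t) * y)) ->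
  (* differentiable on [0, phi_h] (one-sided at the endpoints) *)
  {within `[0, phi_h], continuous f} ->
  (forall x, 0 < x < phi_h -> derivable f x 1) ->
  0 < e ->
  0 <= phi <= phi_h ->
  (forall beta, 0 < beta -> 0 <= lam beta) ->
  lam x @[x --> 0^'+] --> lam0 ->
  Mcal f e phi (lam beta) beta @[beta --> 0^'+] --> Mtilde f e phi lam0 /\
  Dcal f e phi (lam beta) beta @[beta --> 0^'+] --> Dtilde f e phi lam0.
Proof.
move=> _ f_range _ _ _ _ _ e_gt0 phi_range lam_ge0 lam_cvg.
have fphi_gt0 : 0 < f phi by case/andP: (f_range _ phi_range).
have c_cvg : lam b * f phi @[b --> 0^'+] --> lam0 * f phi.
  exact: cvgM lam_cvg (cvg_cst _).
have c_ge0 b : 0 < b -> 0 <= lam b * f phi.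
  by move=> b_gt0; rewrite mulr_ge0 ?lam_ge0 // ltW.
have c0_ge0 : 0 <= lam0 * f phi.
  apply: cvgr_to_ge c_cvg _; near=> b; apply: c_ge0.
  by near: b; exact: nbhs_right_gt.
have D_cvg : Dcal f e phi (lam b) b @[b --> 0^'+] --> Dtilde f e phi lam0.
  under eq_fun do rewrite DcalE.
  case: (ltrP e (lam0 * f phi)) => [ec0|c0e].
    by rewrite Dtilde_gt //; exact: (inv_norm_const_cvg_gt e_gt0 c_cvg ec0).
  by rewrite Dtilde_le //; exact: (inv_norm_const_cvg_le e_gt0 c_cvg c_ge0 c0e).
split=> //; rewrite Mtilde_Dtilde //.
exact: cvgM (cvgM c_cvg (cvg_cst _)) (cvgB (cvg_cst _) D_cvg).
Unshelve. all: by end_near.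
Qed.
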